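(* Let $\mathbb{K}$ be a field and $R=\mathbb{K}\langle x,y\rangle/(xy-1)$. Every left ideal of $R$ is of the form $\Sigma\oplus Rp(x)$, where $p(x)\in\mathbb{K}[x]\subseteq R$ is a polynomial in $x$ and $\Sigma$ is a left ideal of $R$ contained in the socle $I$ of $R$.
   Context: $R$ has $\mathbb{K}$-basis $\{y^ix^j: i,j\ge 0\}$. The socle of $R$ (as a left module) is the two-sided ideal $I=\langle 1-yx\rangle$; it equals $\bigoplus_{n\ge1}S_n$ where $S_n=Rf_n$ with $f_n=y^{n-1}x^{n-1}-y^nx^n$, and each $S_n$ is a simple left $R$-module isomorphic to $S_1$. *)

From HB Require Import structures.
From mathcomp Require Import all_boot all_order all_algebra.
Set Implicit Arguments. Unset Strict Implicit. Unset Printing Implicit Defensive.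
Import GRing.Theory.
Local Open Scope ring_scope.

Section Jacobson.
Variables (K : fieldType) (A : algType K).

Definition yx_monomials_basis (x y : A) : Prop :=
  (forall a : A, exists (n : nat) (c : nat -> nat -> K),
      a = \sum_(i < n) \sum_(j < n) c i j *: (y ^+ i * x ^+ j)) /\
  (forall (n : nat) (c : nat -> nat -> K),
      \sum_(i < n) \sum_(j < n) c i j *: (y ^+ i * x ^+ j) = 0 ->
      forall i j, (i < n)%N -> (j < n)%N -> c i j = 0).

(* A is (isomorphic to) K<x,y>/(xy - 1), presented via generators x, y. *)
Definition jacobson_algebra (x y : A) : Prop :=
  x * y = 1 /\ yx_monomials_basis x y.

Definition left_ideal (L : A -> Prop) : Prop :=
  L 0 /\ (forall a b, L a -> L b -> L (a + b)) /\ (forall r a, L a -> L (r * a)).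

Definition socle_ideal (x y : A) (z : A) : Prop :=
  exists s : seq (A * A), z = \sum_(ab <- s) (ab.1 * (1 - y * x) * ab.2).

Definition poly_at (p : {poly K}) (x : A) : A :=
  \sum_(i < size p) p`_i *: x ^+ i.

Definition direct_sum_with_principal (L S : A -> Prop) (q : A) : Prop :=
  (forall a, L a <-> exists s r, S s /\ a = s + r * q) /\
  (forall r, S (r * q) -> r * q = 0).

End Jacobson.

From mathcomp Require Import all_boot all_order all_algebra.
From Stdlib Require Import Classical.
Set Implicit Arguments. Unset Strict Implicit. Unset Printing Implicit Defensive.
Import GRing.Theory.
Local Open Scope ring_scope.

(* With [e := 1 - y x], an idempotent with [x e = 0 = e y], every [a] satisfies
   [a = \sum_(k < n) y^k e (x^k a) + y^n (x^n a)], and [x^n a] is a polynomial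
   in [x] for [n] large. So a left ideal [L] containing no nonzero polynomial lies
   in the socle. Otherwise let [p] be a nonzero polynomial of least degree in [L];
   the polynomials in [L] are the multiples of [p]. Since [e b = e f(x)] for some
   [f], reducing [f] modulo [p] puts each [y^k e (x^k a)] into [R p(x) + T], where
   [T] consists of the sums [\sum_(k < deg p) r_k e x^k]. Finally [T] meets
   [R p(x)] trivially: [e x^i] sends an element of [T] to some [e w(x)] with
   [deg w < deg p], an element of [R p(x)] to some [e (h p)(x)], and [e f(x) = 0]
   forces [f = 0]; an element killed by every [e x^i] and by a power of [x] is 0. *)

Lemma ex_argmin (T : Type) (m : T -> nat) (Q : T -> Prop) :
  (exists t, Q t) -> exists t, Q t /\ forall u, Q u -> (m t <= m u)%N.
Proof.
case=> t Qt; have [n] := ubnP (m t); elim: n t Qt => // n IH t Qt lt_t.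
case: (classic (exists u, Q u /\ (m u < m t)%N)) => [[u [Qu lt_ut]] | no_lt].
  exact: IH Qu (leq_trans lt_ut lt_t).
exists t; split=> // u Qu; rewrite leqNgt; apply/negP => lt_ut.
by apply: no_lt; exists u.
Qed.

Section RightInvertible.
Variables (R : pzRingType) (x y : R).
Hypothesis xy1 : x * y = 1.
Local Notation e := (1 - y * x).

Lemma mulx_idem : x * e = 0.
Proof. by rewrite mulrBr mulr1 mulrA xy1 mul1r subrr. Qed.

Lemma idem_muly : e * y = 0.
Proof. by rewrite mulrBl mul1r -mulrA xy1 mulr1 subrr. Qed.

Lemma idem_idem : e * e = e.
Proof. by rewrite {1}mulrBl mul1r -mulrA mulx_idem mulr0 subr0. Qed.

Lemma expxS_idem k : x ^+ k.+1 * e = 0.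
Proof. by rewrite exprSr -mulrA mulx_idem mulr0. Qed.

Lemma idem_expyS k : e * y ^+ k.+1 = 0.
Proof. by rewrite exprS mulrA idem_muly mul0r. Qed.

Lemma expx_expy n : x ^+ n * y ^+ n = 1.
Proof.
elim: n => [|n IH]; first by rewrite mulr1.
by rewrite exprSr exprS mulrA -(mulrA _ x) xy1 mulr1.
Qed.

Lemma expx_expy_le n i : (i <= n)%N -> x ^+ n * y ^+ i = x ^+ (n - i).
Proof. by move=> le_in; rewrite -{1}(subnK le_in) exprD -mulrA expx_expy mulr1. Qed.

Lemma subr_expyx n : 1 - y ^+ n * x ^+ n = \sum_(k < n) y ^+ k * e * x ^+ k.
Proof.
elim: n => [|n IH]; first by rewrite big_ord0 mulr1 subrr.
rewrite big_ord_recr /= -IH exprSr exprS mulrBr mulr1 mulrBl !mulrA.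
by rewrite addrA subrK.
Qed.

Lemma idem_expansion n z :
  z = \sum_(k < n) y ^+ k * e * (x ^+ k * z) + y ^+ n * (x ^+ n * z).
Proof.
under eq_bigr do rewrite mulrA.
by rewrite -mulr_suml -subr_expyx mulrBl mul1r mulrA subrK.
Qed.

Lemma eq0_of_idem_expx N z :
  x ^+ N * z = 0 -> (forall i, e * (x ^+ i * z) = 0) -> z = 0.
Proof.
move=> xz0 ez0; rewrite (idem_expansion N z) xz0 mulr0 addr0.
by rewrite big1 // => k _; rewrite -mulrA ez0 mulr0.
Qed.

End RightInvertible.

Lemma horner_alg_wide (K : fieldType) (A : algType K) (x : A) (p : {poly K}) n :
  (size p <= n)%N -> horner_alg x p = \sum_(i < n) p`_i *: x ^+ i.
Proof.
move=> le_pn; rewrite /horner_alg /horner_morph (@horner_coef_wide _ n).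
  by apply: eq_bigr => i _; rewrite coef_map /= mulr_algl.
by rewrite size_map_poly.
Qed.

Lemma poly_atE (K : fieldType) (A : algType K) (p : {poly K}) (x : A) :
  poly_at p x = horner_alg x p.
Proof. exact/esym/horner_alg_wide. Qed.

Lemma left_idealB (K : fieldType) (A : algType K) (L : A -> Prop) a b :
  left_ideal L -> L a -> L b -> L (a - b).
Proof.
case=> _ [LD LM] La Lb; apply: LD => //.
by rewrite -mulN1r; apply: LM.
Qed.

Lemma left_idealI (K : fieldType) (A : algType K) (L1 L2 : A -> Prop) :
  left_ideal L1 -> left_ideal L2 -> left_ideal (fun z => L1 z /\ L2 z).
Proof.
case=> [L1_0 [L1D L1M]] [L2_0 [L2D L2M]]; split=> //.
by split=> [a b [? ?] [? ?] | r a [? ?]]; split; auto.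
Qed.

Section JacobsonAlgebra.
Variables (K : fieldType) (A : algType K) (x y : A).
Hypotheses (xy1 : x * y = 1) (basis : yx_monomials_basis x y).
Local Notation e := (1 - y * x).
Local Notation P := (horner_alg x).

Lemma socle_ideal_sum n (F G : 'I_n -> A) :
  socle_ideal x y (\sum_(k < n) F k * e * G k).
Proof. by exists [seq (F k, G k) | k <- enum 'I_n]; rewrite big_map big_enum. Qed.

Lemma exists_expx_mul_poly a : exists n f, x ^+ n * a = P f.
Proof.
have [n [c ->]] := basis.1 a.
exists n, (\sum_(i < n) \sum_(j < n) c i j *: 'X^(n - i + j)).
rewrite linear_sum !mulr_sumr; apply: eq_bigr => i _.
rewrite linear_sum !mulr_sumr; apply: eq_bigr => j _.
rewrite linearZ /= rmorphXn /= horner_algX mulr_algl -scalerAr mulrA.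
by rewrite (expx_expy_le xy1) ?(ltnW (ltn_ord i)) // -exprD.
Qed.

Lemma exists_idem_mul_poly a : exists f, e * a = e * P f.
Proof.
have [n [c ->]] := basis.1 a.
exists (\sum_(i < n) \sum_(j < n) ((i == 0%N :> nat)%:R * c i j) *: 'X^j).
rewrite linear_sum !mulr_sumr; apply: eq_bigr => i _.
rewrite linear_sum !mulr_sumr; apply: eq_bigr => j _.
rewrite linearZ /= rmorphXn /= horner_algX mulr_algl -!scalerAr.
case: i => [[|i] lt_in] /=; first by rewrite !mul1r.
by rewrite mulrA (idem_expyS xy1) !mul0r scale0r scaler0.
Qed.

Lemma expx_mul_idem_nil a : exists N, x ^+ N * a * e = 0.
Proof.
have [n [c ->]] := basis.1 a.
exists n; rewrite mulr_sumr mulr_suml big1 // => i _.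
rewrite mulr_sumr mulr_suml big1 // => j _.
rewrite -scalerAr -scalerAl mulrA (expx_expy_le xy1) ?(ltnW (ltn_ord i)) // -exprD.
by rewrite -(subnSK (ltn_ord i)) addSn (expxS_idem xy1) scaler0.
Qed.

Lemma poly_mul_idem f : P f * e = f`_0 *: e.
Proof.
rewrite (@horner_alg_wide _ _ _ _ (size f).+1) // big_ord_recl mulrDl.
rewrite mulr_suml big1 ?addr0 => [|i _]; first by rewrite -scalerAl mul1r.
by rewrite lift0 -scalerAl (expxS_idem xy1) scaler0.
Qed.

Lemma idem_poly_eq0 f : e * P f = 0 -> f = 0.
Proof.
move=> ef0; pose n := (size f).+2.
pose c i j : K := match i, j with
  | 0%N, _ => f`_j | 1%N, j'.+1 => - f`_j' | _, _ => 0 end.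
have sum_c0 : \sum_(i < n) \sum_(j < n) c i j *: (y ^+ i * x ^+ j) = 0.
  rewrite -[RHS]ef0 mulrBl mul1r -mulrA.
  rewrite (big_ord_recl (size f).+1) (big_ord_recl (size f)).
  rewrite [X in _ + (_ + X)]big1 ?addr0 => [|i _]; last first.
    by rewrite big1 // => j _; rewrite scale0r.
  rewrite {1}(@horner_alg_wide _ _ _ _ n) ?leqW //; congr (_ + _).
    by apply: eq_bigr => j _; rewrite mul1r.
  rewrite big_ord_recl scale0r add0r (@horner_alg_wide _ _ _ _ n.-1) //.
  rewrite mulr_sumr mulr_sumr -sumrN; apply: eq_bigr => j _.
  by rewrite /c !lift0 /= expr1 scaleNr -!scalerAr exprS mulrA.
apply/polyP => j; rewrite coef0; case: (ltnP j n) => [lt_jn | le_nj].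
  exact: (basis.2 _ _ sum_c0 0 j).
by rewrite nth_default // (leq_trans _ le_nj) // leqW.
Qed.

Definition span_below n (z : A) :=
  exists r : nat -> A, z = \sum_(k < n) r k * e * x ^+ k.

Lemma left_ideal_span_below n : left_ideal (span_below n).
Proof.
split; first by exists (fun=> 0); rewrite big1 // => k _; rewrite !mul0r.
split=> [_ _ [r ->] [s ->] | c _ [r ->]].
  exists (fun k => r k + s k); rewrite -big_split.
  by apply: eq_bigr => k _; rewrite !mulrDl.
exists (fun k => c * r k); rewrite mulr_sumr.
by apply: eq_bigr => k _; rewrite !mulrA.
Qed.

Lemma span_below_expx_nil n z : span_below n z -> exists N, x ^+ N * z = 0.
Proof.
case=> r ->; elim: n => [|n [N xN0]]; first by exists 0%N; rewrite big_ord0 mulr0.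
have [M xM0] := expx_mul_idem_nil (x ^+ N * r n).
exists (M + N)%N; rewrite big_ord_recr /= mulrDr exprD -!mulrA xN0 mulr0 add0r.
by rewrite !mulrA -(mulrA (x ^+ M)) xM0 mul0r.
Qed.

Lemma idem_mul_span_below n z :
  span_below n z -> exists w : {poly K}, (size w <= n)%N /\ e * z = e * P w.
Proof.
case=> r ->; elim: n => [|n [w [size_w ew]]].
  by exists 0; rewrite big_ord0 size_poly0 rmorph0 !mulr0.
have [h eh] := exists_idem_mul_poly (r n).
exists (w + h`_0 *: 'X^n); split.
  rewrite (leq_trans (size_polyD _ _)) // geq_max (leq_trans size_w) //=.
  by rewrite (leq_trans (size_scale_leq _ _)) // size_polyXn.
rewrite big_ord_recr /= mulrDr ew rmorphD /= [RHS]mulrDr; congr (_ + _).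
rewrite !mulrA eh -(mulrA e) poly_mul_idem -scalerAr (idem_idem xy1).
by rewrite linearZ /= rmorphXn /= horner_algX mulr_algl -scalerAr -scalerAl.
Qed.

Lemma span_below_principal_eq0 (p : {poly K}) r :
  p != 0 -> span_below (size p).-1 (r * P p) -> r * P p = 0.
Proof.
move=> p_nz span_rp; have [N xN0] := span_below_expx_nil span_rp.
apply: (eq0_of_idem_expx (y := y) xN0) => i.
have [h eh] := exists_idem_mul_poly (x ^+ i * r).
have ehp : e * (x ^+ i * (r * P p)) = e * P (h * p).
  by rewrite !mulrA -(mulrA e) eh -mulrA rmorphM.
have [w [size_w ew]] :=
  idem_mul_span_below ((left_ideal_span_below _).2.2 (x ^+ i) _ span_rp).
have hpw : h * p = w.
  apply/eqP; rewrite -subr_eq0; apply/eqP/idem_poly_eq0.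
  by rewrite rmorphB mulrBr -ehp -ew subrr.
suff hp0 : h * p = 0 by rewrite ehp hp0 rmorph0 mulr0.
apply: contraTeq size_w => hp_nz; rewrite -hpw -ltnNge.
apply: leq_trans (dvdp_leq hp_nz (dvdp_mull h (dvdpp p))).
by rewrite ltn_predL size_poly_gt0.
Qed.

Definition principal_plus_span (p : {poly K}) z :=
  exists q t, span_below (size p).-1 t /\ z = q * P p + t.

Lemma principal_plus_span_sum p n (F : 'I_n -> A) :
  (forall k, principal_plus_span p (F k)) ->
  principal_plus_span p (\sum_(k < n) F k).
Proof.
have [span0 [spanD _]] := left_ideal_span_below (size p).-1.
move=> splitF; apply: big_ind => //.
  by exists 0, 0; rewrite mul0r addr0.
move=> _ _ [q1 [t1 [span_t1 ->]]] [q2 [t2 [span_t2 ->]]].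
exists (q1 + q2), (t1 + t2); split; first exact: spanD.
by rewrite mulrDl addrACA.
Qed.

(* Division of [f] by [p], where [e * b = e * P f]: the remainder has degree below [p]. *)
Lemma principal_plus_span_idem p r b :
  p != 0 -> principal_plus_span p (r * e * b).
Proof.
move=> p_nz; have [f ef] := exists_idem_mul_poly b.
have size_mod : (size (f %% p)%R <= (size p).-1)%N.
  by rewrite -ltnS prednK ?ltn_modp // size_poly_gt0.
exists (r * e * P (f %/ p)),
  (\sum_(k < (size p).-1) ((f %% p)%R`_k *: r) * e * x ^+ k); split.
  by exists (fun k => (f %% p)%R`_k *: r).
rewrite -mulrA ef {1}(divp_eq f p) rmorphD rmorphM /= mulrDr mulrDr !mulrA.
rewrite (horner_alg_wide _ size_mod) mulr_sumr; congr (_ + _).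
by apply: eq_bigr => k _; rewrite -scalerAr !scalerAl.
Qed.

Section MinimalPolynomial.
Variables (L : A -> Prop) (p : {poly K}).
Hypotheses (idealL : left_ideal L) (p_nz : p != 0) (Lp : L (P p)).
Hypothesis p_min : forall f, f != 0 -> L (P f) -> (size p <= size f)%N.

Lemma min_poly_dvdp f : L (P f) -> p %| f.
Proof.
move=> Lf; have L_mod : L (P (f %% p)%R).
  have -> : (f %% p)%R = f - f %/ p * p.
    by rewrite {2}(divp_eq f p) addrAC subrr add0r.
  by rewrite rmorphB rmorphM; apply: left_idealB => //; apply: idealL.2.2.
apply/modp_eq0P/eqP/negPn/negP => mod_nz.
by have := p_min mod_nz L_mod; rewrite leqNgt ltn_modp p_nz.
Qed.

Lemma direct_sum_min_poly :
  direct_sum_with_principal L (fun z => L z /\ span_below (size p).-1 z) (P p).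
Proof.
have [_ [LD LM]] := idealL.
split=> [a|r [_ span_rp]]; last exact: span_below_principal_eq0 p_nz span_rp.
split=> [La|[s [r [[Ls _] ->]]]]; last by apply: LD => //; apply: LM.
have [n [f xa]] := exists_expx_mul_poly a.
have /divpK fE : p %| f by apply: min_poly_dvdp; rewrite -xa; apply: LM.
have aE := idem_expansion x y n a; set sigma := \sum_(k < n) _ in aE.
have [q [t [span_t sigmaE]]] : principal_plus_span p sigma.
  by apply: principal_plus_span_sum => k; apply: principal_plus_span_idem.
exists t, (q + y ^+ n * P (f %/ p)); split.
  split=> //; have -> : t = a - y ^+ n * (x ^+ n * a) - q * P p.
    by rewrite {1}aE sigmaE addrK addrAC subrr add0r.
  apply: left_idealB => //; last exact: LM.
  by apply: left_idealB => //; apply/LM/LM.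
by rewrite {1}aE sigmaE xa -[in P f]fE rmorphM mulrDl mulrA -addrA addrCA.
Qed.

End MinimalPolynomial.

Lemma poly_free_left_ideal_socle (L : A -> Prop) :
  left_ideal L -> ~ (exists f, f != 0 /\ L (P f)) ->
  forall a, L a -> socle_ideal x y a.
Proof.
case=> _ [_ LM] no_poly a La; have [n [f xa]] := exists_expx_mul_poly a.
have f0 : f = 0.
  apply/eqP/negPn/negP => f_nz; apply: no_poly; exists f.
  by split; rewrite // -xa; apply: LM.
rewrite (idem_expansion x y n a) xa f0 rmorph0 mulr0 addr0.
exact: socle_ideal_sum.
Qed.

Lemma left_ideal_min_poly_or_socle (L : A -> Prop) : left_ideal L ->
  (exists p, [/\ p != 0, L (P p) &
     forall f, f != 0 -> L (P f) -> (size p <= size f)%N]) \/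
  (forall a, L a -> socle_ideal x y a).
Proof.
move=> idealL; case: (classic (exists f, f != 0 /\ L (P f))) => [has_poly | no_poly].
  have [p [[p_nz Lp] p_min]] := ex_argmin (fun f : {poly K} => size f) has_poly.
  by left; exists p; split=> // f f_nz Lf; apply: p_min.
by right; apply: poly_free_left_ideal_socle.
Qed.

End JacobsonAlgebra.

Theorem theorem2 (K : fieldType) (A : algType K) (x y : A)
    (hA : jacobson_algebra x y) (L : A -> Prop) (hL : left_ideal L) :
  exists (S : A -> Prop) (p : {poly K}),
    left_ideal S /\ (forall s, S s -> socle_ideal x y s) /\
    direct_sum_with_principal L S (poly_at p x).
Proof.
case: hA => xy1 basis.
case: (left_ideal_min_poly_or_socle xy1 basis hL) => [[p [p_nz Lp p_min]] | L_socle].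
  exists (fun z => L z /\ span_below x y (size p).-1 z), p; rewrite poly_atE.
  split; first exact/left_idealI/left_ideal_span_below.
  split; first by move=> s [_ [r ->]]; apply: socle_ideal_sum.
  exact: direct_sum_min_poly.
exists L, 0; rewrite poly_atE rmorph0; do 2!split=> //.
split=> [a | r _]; last by rewrite mulr0.
by split=> [La | [s [r [Ls ->]]]]; [exists a, 0 | ]; rewrite mulr0 addr0.
Qed.
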